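(* Let $Q$ be a binary symmetric $m\times m$ matrix of rank $r$ over $\mathbb{F}_2$, let $b\in\mathbb{F}_2^m$, and let $$S=\sum_{x\in\mathbb{F}_2^m} i^{\,xQx^\top+2bx^\top}.$$ Then there exists $z_1\in\mathbb{F}_2^m$ with $z_1Q=d_Q$ (over $\mathbb{F}_2$), and either $S=0$ or $$S^2=i^{\,z_1Qz_1^\top+2bz_1^\top}\,2^{2m-r}.$$
   Context: Here $i=\sqrt{-1}$, $d_Q$ denotes the main diagonal of $Q$ as a binary vector, and exponents of $i$ are computed in the integers modulo 4, viewing binary entries as the integers 0 and 1. *)

From HB Require Import structures.
From mathcomp Require Import all_boot all_order all_algebra.
From mathcomp Require Import algC.
Set Implicit Arguments. Unset Strict Implicit. Unset Printing Implicit Defensive.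
Import Order.TTheory GRing.Theory Num.Theory.
Local Open Scope ring_scope.

Definition bin (x : 'F_2) : nat := nat_of_ord x.

Definition qform (m : nat) (Q : 'M['F_2]_m) (x : 'rV['F_2]_m) : nat :=
  (\sum_(j < m) \sum_(k < m) bin (x ord0 j) * bin (Q j k) * bin (x ord0 k))%N.

Definition lform (m : nat) (b x : 'rV['F_2]_m) : nat :=
  (\sum_(j < m) bin (b ord0 j) * bin (x ord0 j))%N.

(* i ^ (x Q x^T + 2 b x^T); since i^4 = 1, a nat exponent equals the exponent mod 4. *)
Definition iexp (m : nat) (Q : 'M['F_2]_m) (b x : 'rV['F_2]_m) : algC :=
  'i ^+ (qform Q x + 2 * lform b x)%N.

Definition diagv (m : nat) (Q : 'M['F_2]_m) : 'rV['F_2]_m := \row_j Q j j.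

Definition Ssum (m : nat) (Q : 'M['F_2]_m) (b : 'rV['F_2]_m) : algC :=
  \sum_(x : 'rV['F_2]_m) iexp Q b x.

From HB Require Import structures.
From mathcomp Require Import all_boot all_order all_algebra.
From mathcomp Require Import algC ring.
Set Implicit Arguments.
Unset Strict Implicit.
Unset Printing Implicit Defensive.
Import Order.TTheory GRing.Theory Num.Theory.
Local Open Scope ring_scope.

(** Write [e x] for the summand of [S].  Lifting [x] to [Z/4] shows
    [e (x + y) = e x * e y * (-1)^(x Q y^T)], and since [x Q x^T = x d_Q^T] over
    [F_2] also [e x ^ 2 = (-1)^(x d_Q^T)].  Substituting [y = x + u] in
    [S^2 = sum_(x,y) e x e y] and summing the character [x |-> (-1)^(x (d_Q + u Q)^T)]
    over [x] leaves [S^2 = 2^m sum_(u Q = d_Q) e u]; [d_Q] does lie in the row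
    space of [Q], because it is orthogonal to its kernel.  Translating by a solution
    [z1] gives [e z1] times the sum of [e] over the kernel of [Q], on which [e] is a
    character: that sum is [0] or the size [2^(m - r)] of the kernel. *)

Lemma F2_cases (a : 'F_2) : a = 0 \/ a = 1.
Proof. by case: a => -[|[|//]] lt_a; [left | right]; apply: val_inj. Qed.

Lemma addrr_F2 m n (A : 'M['F_2]_(m, n)) : A + A = 0.
Proof. by apply/matrixP => i j; rewrite !mxE addrr_pchar2 // pchar_Fp. Qed.

Lemma oppr_F2 m n (A : 'M['F_2]_(m, n)) : - A = A.
Proof. by apply/matrixP => i j; rewrite !mxE oppr_pchar2 // pchar_Fp. Qed.

Definition sign2 (a : 'F_2) : algC := (-1) ^+ bin a.

Lemma sign2D a c : sign2 (a + c) = sign2 a * sign2 c.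
Proof.
case: (F2_cases a) (F2_cases c) => -> [] ->;
  by rewrite /sign2 /= ?expr0 ?mulr1 ?mul1r ?mulN1r ?opprK.
Qed.

Lemma sign2_0 : sign2 0 = 1. Proof. by []. Qed.

Lemma sign2_sqr a : sign2 a * sign2 a = 1.
Proof. by rewrite -sign2D addrr_pchar2 // pchar_Fp. Qed.

Lemma char_sum_dichotomy (V : finZmodType) (R : idomainType) (K : pred V)
    (chi : V -> R) :
  (forall x y, K x -> K y -> K (x - y)) ->
  (forall x y, K x -> K y -> chi (x + y) = chi x * chi y) ->
  \sum_(x | K x) chi x = 0 \/ (forall x, K x -> chi x = 1).
Proof.
move=> KB chiD.
case: (pickP [pred x | K x && (chi x != 1)]) => [x0 /andP[Kx0 chix0] | chi1];
  [left | right]; last by move=> x Kx; move: (chi1 x); rewrite /= Kx => /negbFE/eqP.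
have KD x : K (x0 + x) = K x.
  have K0 : K 0 by rewrite -(subrr x0) KB.
  apply/idP/idP => Kx; first by move: (KB _ _ Kx Kx0); rewrite addrC addKr.
  by rewrite -[x]opprK KB // -sub0r KB.
have shift : \sum_(x | K x) chi x = chi x0 * \sum_(x | K x) chi x.
  rewrite mulr_sumr (reindex_inj (addrI x0)) /=.
  by apply: eq_big => [x | x]; rewrite KD // => Kx; rewrite chiD.
have : (1 - chi x0) * \sum_(x | K x) chi x = 0 by rewrite mulrBl mul1r -shift subrr.
by move/eqP; rewrite mulf_eq0 subr_eq0 eq_sym (negbTE chix0) => /eqP.
Qed.

Lemma sum_sign2_dot m (w : 'rV['F_2]_m) :
  \sum_(x : 'rV['F_2]_m) sign2 ((x *m w^T) ord0 ord0) =
  if w == 0 then (2 ^ m)%:R else 0.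
Proof.
have [-> | nz_w] := eqVneq w 0.
  under eq_bigr do rewrite trmx0 mulmx0 mxE.
  by rewrite sumr_const card_mx card_Fp // mul1n.
have [j wj | w0] := pickP (fun j => w ord0 j != 0); last first.
  by case/eqP: nz_w; apply/rowP => j; rewrite mxE; apply/eqP/negbFE/w0.
have chiD (x y : 'rV_m) : sign2 (((x + y) *m w^T) ord0 ord0) =
    sign2 ((x *m w^T) ord0 ord0) * sign2 ((y *m w^T) ord0 ord0).
  by rewrite mulmxDl mxE sign2D.
have [//|/(_ (delta_mx 0 j) isT)] :=
  char_sum_dichotomy (K := xpredT) (fun _ _ _ _ => isT) (fun x y _ _ => chiD x y).
rewrite -rowE !mxE.
have -> : w ord0 j = 1 by case: (F2_cases (w ord0 j)) wj => ->.
by move/eqP; rewrite eqNr oner_eq0.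
Qed.

Lemma card_kermx_row (F : finFieldType) m n (A : 'M[F]_(m, n)) :
  #|[pred k : 'rV[F]_m | k *m A == 0]| = (#|F| ^ (m - \rank A))%N.
Proof.
pose B := row_base (kermx A).
have -> : #|[pred k : 'rV[F]_m | k *m A == 0]| =
          #|codom (fun z : 'rV_(\rank (kermx A)) => z *m B)|.
  apply: eq_card => k; rewrite !inE -sub_kermx -(eq_row_base (kermx A)).
  by apply/submxP/codomP => -[z ->]; exists z.
rewrite card_codom; last exact: row_free_inj (row_base_free _).
by rewrite card_mx mul1n mxrank_ker.
Qed.

Lemma trmx_mx11 (R : Type) (A : 'M[R]_1) : A^T = A.
Proof. by apply/matrixP => i j; rewrite mxE !ord1. Qed.

Lemma bilin_mxC (R : comPzRingType) n (S : 'M[R]_n) (u w : 'rV[R]_n) :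
  S^T = S -> w *m S *m u^T = u *m S *m w^T.
Proof. by move=> Ssym; rewrite -[LHS]trmx_mx11 !trmx_mul trmxK Ssym mulmxA. Qed.

Section SymmetricBilinearForm.
Variables (R : comPzRingType) (n : nat) (S : 'M[R]_n).
Hypothesis Ssym : S^T = S.

Definition bform (u w : 'rV[R]_n) : R := (u *m S *m w^T) ord0 ord0.

Lemma bformC u w : bform w u = bform u w.
Proof. by rewrite /bform bilin_mxC. Qed.

Lemma bformDl u u' w : bform (u + u') w = bform u w + bform u' w.
Proof. by rewrite /bform !mulmxDl mxE. Qed.

Lemma bformZl k u w : bform (k *: u) w = k * bform u w.
Proof. by rewrite /bform -!scalemxAl mxE. Qed.

Lemma bformDr u w w' : bform u (w + w') = bform u w + bform u w'.
Proof. by rewrite ![bform u _]bformC bformDl. Qed.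

Lemma bformZr k u w : bform u (k *: w) = k * bform u w.
Proof. by rewrite ![bform u _]bformC bformZl. Qed.

Lemma bform_diagD u w :
  bform (u + w) (u + w) = bform u u + bform w w + 2 * bform u w.
Proof. by rewrite bformDl !bformDr (bformC u w); ring. Qed.

End SymmetricBilinearForm.

Section SymmetricF2Form.
Variables (m : nat) (Q : 'M['F_2]_m).
Hypothesis Qsym : Q^T = Q.

Lemma quad_formD (x y : 'rV['F_2]_m) :
  (x + y) *m Q *m (x + y)^T = x *m Q *m x^T + y *m Q *m y^T.
Proof.
rewrite linearD /= !(mulmxDl, mulmxDr) (bilin_mxC y x Qsym).
by rewrite addrACA -addrA [X in _ + X]addrA addrr_F2 add0r.
Qed.

Lemma quad_form_diag (x : 'rV['F_2]_m) : x *m Q *m x^T = x *m (diagv Q)^T.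
Proof.
(* Both sides are additive in [x] by [quad_formD], so compare them on unit vectors. *)
pose q x := x *m Q *m x^T - x *m (diagv Q)^T.
have qD : {morph q : x y / x + y}.
  by move=> y z; rewrite /q quad_formD mulmxDl opprD addrACA.
have q0 : q 0 = 0 by rewrite /q !mul0mx subr0.
suff : q x = 0 by move/eqP; rewrite subr_eq0 => /eqP.
rewrite [x]row_sum_delta (big_morph q qD q0) big1 // => j _.
rewrite /q -!scalemxAl; case: (F2_cases (x 0 j)) => ->; first by rewrite !scale0r subr0.
apply/matrixP => i k; rewrite !ord1 !scale1r trmx_delta -!rowE -colE.
by rewrite !mxE subrr.
Qed.

Lemma diagv_mul_ker (w : 'cV['F_2]_m) : Q *m w = 0 -> diagv Q *m w = 0.
Proof.
move=> Qw0; rewrite -[LHS]trmx_mx11 trmx_mul -quad_form_diag trmxK.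
by rewrite -mulmxA Qw0 mulmx0.
Qed.

Lemma diagv_sub_row_space : (diagv Q <= Q)%MS.
Proof.
rewrite submxE; apply/eqP/matrixP => i j.
have -> : (diagv Q *m cokermx Q) i j = (diagv Q *m col j (cokermx Q)) i 0.
  by rewrite [in RHS]colE [in RHS]mulmxA -colE [RHS]mxE.
by rewrite diagv_mul_ker ?mxE // colE mulmxA mulmx_coker mul0mx.
Qed.

End SymmetricF2Form.

Definition lift4 (a : 'F_2) : 'Z_4 := (bin a)%:R.

Lemma lift4M a c : lift4 (a * c) = lift4 a * lift4 c.
Proof. by case: (F2_cases a) (F2_cases c) => -> [] ->; apply: val_inj. Qed.

Lemma double_lift4D a c : 2 * lift4 (a + c) = 2 * lift4 a + 2 * lift4 c.
Proof. by case: (F2_cases a) (F2_cases c) => -> [] ->; apply: val_inj. Qed.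

Lemma double_double_Z4 (z : 'Z_4) : 2 * (2 * z) = 0.
Proof. by rewrite mulrA (_ : 2 * 2 = 0) ?mul0r //; apply: val_inj. Qed.

(* Carries of [F_2] addition: [lift4 (a + c) = lift4 a + lift4 c - 2 lift4 a lift4 c],
   and [-2 = 2] in [Z/4]. *)
Lemma map_lift4D m n (A B : 'M['F_2]_(m, n)) :
  map_mx lift4 (A + B) =
  map_mx lift4 A + map_mx lift4 B + 2 *: map2_mx (fun a c => lift4 a * lift4 c) A B.
Proof.
apply/matrixP => i j; rewrite !mxE.
by case: (F2_cases (A i j)) (F2_cases (B i j)) => -> [] ->; apply: val_inj.
Qed.

Lemma double_lift4_sum (I : Type) (r : seq I) (P : pred I) (F : I -> 'F_2) :
  2 * lift4 (\sum_(i <- r | P i) F i) = \sum_(i <- r | P i) 2 * lift4 (F i).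
Proof. by apply: (big_morph (fun a => 2 * lift4 a) double_lift4D); apply: val_inj. Qed.

Lemma double_map_lift4_mul m n p (A : 'M['F_2]_(m, n)) (B : 'M['F_2]_(n, p)) :
  2 *: map_mx lift4 (A *m B) = 2 *: (map_mx lift4 A *m map_mx lift4 B).
Proof.
apply/matrixP => i j; rewrite !mxE double_lift4_sum mulr_sumr.
by apply: eq_bigr => k _; rewrite !mxE lift4M mulrA.
Qed.

Definition ipow (z : 'Z_4) : algC := 'i ^+ z.

Lemma ipow_nat n : ipow n%:R = 'i ^+ n.
Proof.
have i4 : 'i ^+ 4 = 1 :> algC by rewrite (exprM _ 2 2) sqrCi expr2 mulN1r opprK.
by rewrite /ipow val_Zp_nat // {2}(divn_eq n 4) exprD mulnC exprM i4 expr1n mul1r.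
Qed.

Lemma ipowD z w : ipow (z + w) = ipow z * ipow w.
Proof. by rewrite -[z]natr_Zp -[w]natr_Zp -natrD !ipow_nat exprD. Qed.

Lemma ipow_double_lift4 a : ipow (2 * lift4 a) = sign2 a.
Proof. by case: (F2_cases a) => ->; rewrite /ipow /= ?sqrCi. Qed.

Section Phase.
Variables (m : nat) (Q : 'M['F_2]_m) (b : 'rV['F_2]_m).
Hypothesis Qsym : Q^T = Q.

Let Q4sym : (map_mx lift4 Q)^T = map_mx lift4 Q.
Proof. by rewrite map_trmx Qsym. Qed.

Definition phase (x : 'rV['F_2]_m) : 'Z_4 :=
  bform (map_mx lift4 Q) (map_mx lift4 x) (map_mx lift4 x) +
  2 * lift4 ((b *m x^T) ord0 ord0).

Lemma iexp_phase x : iexp Q b x = ipow (phase x).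
Proof.
rewrite /iexp -ipow_nat natrD natrM; congr (ipow (_ + _)).
  rewrite /qform /bform natr_sum mxE.
  under eq_bigr do rewrite natr_sum.
  rewrite exchange_big; apply: eq_bigr => k _.
  rewrite !mxE mulr_suml; apply: eq_bigr => j _.
  by rewrite !natrM !mxE.
rewrite mxE double_lift4_sum /lform natr_sum mulr_sumr; apply: eq_bigr => j _.
by rewrite natrM !mxE lift4M.
Qed.

Lemma double_lift4_bilin (x y : 'rV['F_2]_m) :
  2 * lift4 ((x *m Q *m y^T) ord0 ord0) =
  2 * bform (map_mx lift4 Q) (map_mx lift4 x) (map_mx lift4 y).
Proof.
transitivity ((2 *: map_mx lift4 (x *m Q *m y^T)) ord0 ord0); first by rewrite !mxE.
rewrite double_map_lift4_mul scalemxAl double_map_lift4_mul -scalemxAl -map_trmx.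
by rewrite mxE.
Qed.

Lemma phaseD x y :
  phase (x + y) = phase x + phase y + 2 * lift4 ((x *m Q *m y^T) ord0 ord0).
Proof.
rewrite /phase linearD /= mulmxDr mxE double_lift4D map_lift4D double_lift4_bilin.
rewrite !(bform_diagD Q4sym) bformZl !(bformZr Q4sym) !double_double_Z4 !addr0.
by ring.
Qed.

Lemma iexpD x y :
  iexp Q b (x + y) = iexp Q b x * iexp Q b y * sign2 ((x *m Q *m y^T) ord0 ord0).
Proof. by rewrite !iexp_phase phaseD !ipowD !ipow_double_lift4. Qed.

Lemma iexp0 : iexp Q b 0 = 1.
Proof.
rewrite /iexp /qform /lform !big1 // => j _; rewrite mxE /= ?muln0 //.
by rewrite big1.
Qed.

Lemma iexp_sqr x : iexp Q b x ^+ 2 = sign2 ((x *m (diagv Q)^T) ord0 ord0).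
Proof.
have := iexpD x x; rewrite addrr_F2 iexp0 quad_form_diag // => e0.
by rewrite expr2 -[LHS]mulr1 -(sign2_sqr ((x *m (diagv Q)^T) ord0 ord0)) mulrA -e0 mul1r.
Qed.

Lemma Ssum_sqr :
  Ssum Q b ^+ 2 = (2 ^ m)%:R * \sum_(u | u *m Q == diagv Q) iexp Q b u.
Proof.
rewrite expr2 /Ssum mulr_suml.
transitivity (\sum_(x : 'rV_m) \sum_(u : 'rV_m)
    iexp Q b u * sign2 ((x *m (diagv Q + u *m Q)^T) ord0 ord0)).
  apply: eq_bigr => x _; rewrite mulr_sumr (reindex_inj (addrI x)) /=.
  apply: eq_bigr => u _; rewrite iexpD !mulrA -expr2 iexp_sqr.
  rewrite linearD /= mulmxDr [in RHS]mxE sign2D trmx_mul Qsym mulmxA.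
  by rewrite [_ * iexp Q b u]mulrC -mulrA.
rewrite exchange_big mulr_sumr [RHS]big_mkcond /=; apply: eq_bigr => u _.
rewrite -mulr_sumr sum_sign2_dot addr_eq0 oppr_F2 eq_sym.
by case: eqP => _; rewrite ?mulr0 // mulrC.
Qed.

Lemma sum_iexp_diag_coset z :
  z *m Q = diagv Q ->
  \sum_(u | u *m Q == diagv Q) iexp Q b u =
  iexp Q b z * \sum_(k | k *m Q == 0) iexp Q b k.
Proof.
move=> zQ; have coset k : ((z + k) *m Q == diagv Q) = (k *m Q == 0).
  by rewrite mulmxDl zQ -{2}[diagv Q]addr0 (inj_eq (addrI _)).
rewrite mulr_sumr (reindex_inj (addrI z)) /=.
apply: eq_big => [k | k]; rewrite coset // => /eqP kQ.
by rewrite iexpD (bilin_mxC k z Qsym) kQ mul0mx mxE sign2_0 mulr1.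
Qed.

Lemma sum_iexp_ker :
  \sum_(k | k *m Q == 0) iexp Q b k = 0 \/
  \sum_(k | k *m Q == 0) iexp Q b k = (2 ^ (m - \rank Q))%:R.
Proof.
have KB (x y : 'rV_m) : x *m Q == 0 -> y *m Q == 0 -> (x - y) *m Q == 0.
  by move=> /eqP xQ /eqP yQ; rewrite mulmxBl xQ yQ subrr.
have chiD x y :
    x *m Q == 0 -> y *m Q == 0 -> iexp Q b (x + y) = iexp Q b x * iexp Q b y.
  by move=> /eqP xQ _; rewrite iexpD xQ !mul0mx mxE sign2_0 mulr1.
have [-> | e1] := char_sum_dichotomy KB chiD; [by left | right].
by rewrite (eq_bigr (fun _ => 1)) // sumr_const (card_kermx_row Q) card_Fp.
Qed.

End Phase.

Theorem propositionA2 (m r : nat) (Q : 'M['F_2]_m) (b : 'rV['F_2]_m) :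
  Q^T = Q -> \rank Q = r ->
  exists z1 : 'rV['F_2]_m,
    z1 *m Q = diagv Q /\
    (Ssum Q b = 0 \/
     (Ssum Q b) ^+ 2 = iexp Q b z1 * 2%:R ^+ (2 * m - r)%N).
Proof.
move=> Qsym rkQ.
have [z1 z1Q] := submxP (diagv_sub_row_space Qsym).
exists z1; split; first by [].
have S2 := Ssum_sqr b Qsym; rewrite (sum_iexp_diag_coset b Qsym (esym z1Q)) in S2.
have [ker0 | kerN] := sum_iexp_ker b Qsym; [left | right].
  by move: S2; rewrite ker0 !mulr0 => /eqP; rewrite expf_eq0 => /andP[_ /eqP].
rewrite S2 kerN rkQ mulrCA -natrM -expnD natrX.
have r_le_m : (r <= m)%N by rewrite -rkQ rank_leq_row.
by rewrite mul2n -addnn addnBA.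
Qed.
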